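(* Let $w>1$ be a fixed-precision binary number represented by $n$ bits, of which the first $m$ correspond to its integer part, and let $b\geq \max\{2m,4\}$. Consider the following algorithm (SQRT), in which every iterate is computed exactly in fixed precision arithmetic and then truncated to $b$ bits after the decimal point before being passed to the next step: if $w=1$ return $1$; otherwise set $\hat{x}_0 = 2^{-p}$, where $p\in\mathbb{N}$ is such that $2^p > w \geq 2^{p-1}$, set $s=\lceil \log_2 b\rceil$, and for $i=1,\dots,s$ compute $x_i = -w\hat{x}_{i-1}^2 + 2\hat{x}_{i-1}$ and let $\hat{x}_i$ be $x_i$ truncated (so $\hat{x}_s\approx 1/w$); then set $\hat{y}_0 = 2^{\lfloor (q-1)/2\rfloor}$, where $q\in\mathbb{N}$ is such that $2^{1-q} > \hat{x}_s \geq 2^{-q}$, and for $j=1,\dots,s$ compute $y_j = \frac{1}{2}(3\hat{y}_{j-1} - \hat{x}_s\hat{y}_{j-1}^3)$ and let $\hat{y}_j$ be $y_j$ truncated; return $\hat{y}_s$. Then the returned value $\hat{y}_s$ approximates $\sqrt{w}$ with error \begin{equation*} |\hat{y}_{s}-\sqrt{w}| \leq \left( \frac{3}{4} \right)^{b-2m} \left( 2+ b + \log_2 b \right). \end{equation*}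
   Context: Numbers are held in fixed precision: an $n$-bit register holding $w=\sum_{j=m-n}^{m-1} w^{(j)}2^j$, with $m$ bits for the integer part and $n-m$ bits for the fractional part. The first stage is Newton's iteration applied to $f_1(x)=\frac{1}{x}-w$ (approximating $1/w$), and the second stage is Newton's iteration applied to $f_2(y)=\frac{1}{y^2}-\hat{x}_s$ (approximating $1/\sqrt{\hat{x}_s}\approx\sqrt{w}$); each step uses only addition and multiplication. *)

From Stdlib Require Import Reals Lra Lia ZArith List.
Open Scope R_scope.

(* w is an n-bit fixed-precision binary number with m integer bits:
   w = sum_{j = m-n}^{m-1} w^(j) 2^j with bits w^(j) in {0,1}.
   Bit number k (k = 0..n-1) below has weight 2^(m-n+k). *)
Definition fixed_point (n m : nat) (w : R) : Prop :=
  exists bits : nat -> bool,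
    w = fold_right Rplus 0
          (map (fun k => if bits k
                         then powerRZ 2 (Z.of_nat m - Z.of_nat n + Z.of_nat k)
                         else 0) (seq 0 n)).

Definition trunc (b : nat) (x : R) : R := IZR (Int_part (x * 2 ^ b)) / 2 ^ b.

(* First stage: Newton for 1/x - w, truncated iterates hat x_i. *)
Fixpoint xhat (b : nat) (w : R) (p : nat) (i : nat) : R :=
  match i with
  | O => / 2 ^ p
  | S i' => let x := xhat b w p i' in trunc b (- w * x ^ 2 + 2 * x)
  end.

(* Second stage: Newton for 1/y^2 - xs, truncated iterates hat y_j. *)
Fixpoint yhat (b : nat) (xs y0 : R) (j : nat) : R :=
  match j with
  | O => y0
  | S j' => let y := yhat b xs y0 j' in trunc b (/ 2 * (3 * y - xs * y ^ 3))
  end.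

From Stdlib Require Import Reals ZArith Lra Lia Psatz List.
Open Scope R_scope.

(* Write e_i = 1 - w x_i and f_j = 1 - x_s y_j^2 for the residuals of the two Newton
   iterations.  Exactly, e_(i+1) = e_i^2 and f_(j+1) = f_j^2 (3 + f_j) / 4; truncation to
   b bits perturbs these by at most w 2^-b and 2^(1-b) / sqrt w.  Starting from residuals
   at most 1/2 and 3/4, the s = ceil(log2 b) steps bring both below (3/4)^(2^s) <= (3/4)^b,
   up to a floor of order 2^-b w, and y_s^2 (1 - e_s) = w (1 - f_s) turns this into
   |y_s - sqrt w| <= 2 sqrt w max(e_s, f_s).  Finally w < 2^m converts sqrt w (3/4)^b and
   2^-b w^2 into multiples of (3/4)^(b - 2m). *)

Lemma pow_le_pow_of_le_1 (x : R) (k n : nat) :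
  0 <= x <= 1 -> (k <= n)%nat -> x ^ n <= x ^ k.
Proof.
  intros Hx Hkn.
  replace n with (k + (n - k))%nat by lia. rewrite pow_add.
  assert (Hk : 0 <= x ^ k) by (apply pow_le; lra).
  assert (Hnk : x ^ (n - k) <= 1) by (rewrite <- (pow1 (n - k)); apply pow_incr; lra).
  nra.
Qed.

Lemma trunc_bounds (b : nat) (z : R) : z - / 2 ^ b < trunc b z <= z.
Proof.
  unfold trunc. pose proof (base_Int_part (z * 2 ^ b)) as [Hlo Hhi].
  set (t := IZR (Int_part (z * 2 ^ b))) in *.
  assert (HP : 0 < 2 ^ b) by (apply pow_lt; lra).
  split.
  - apply (Rmult_lt_reg_r (2 ^ b)); [exact HP|].
    replace ((z - / 2 ^ b) * 2 ^ b) with (z * 2 ^ b - 1) by (field; lra).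
    replace (t / 2 ^ b * 2 ^ b) with t by (field; lra). lra.
  - apply (Rmult_le_reg_r (2 ^ b)); [exact HP|].
    replace (t / 2 ^ b * 2 ^ b) with t by (field; lra). lra.
Qed.

Lemma inv_pow2_le (k b : nat) : (k <= b)%nat -> / 2 ^ b <= / 2 ^ k.
Proof.
  intros Hkb. apply Rinv_le_contravar; [apply pow_lt; lra|]. apply Rle_pow; [lra | exact Hkb].
Qed.

Lemma sq_lt_pow2 (m b : nat) (w : R) : 0 <= w < 2 ^ m -> (2 * m <= b)%nat -> w ^ 2 < 2 ^ b.
Proof.
  intros Hw Hmb.
  assert (Hsq : w ^ 2 < (2 ^ m) ^ 2) by nra.
  rewrite <- pow_mult, Nat.mul_comm in Hsq.
  assert (2 ^ (2 * m) <= 2 ^ b) by (apply Rle_pow; [lra | exact Hmb]).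
  lra.
Qed.

Lemma sq_div_pow2_lt (b : nat) (w : R) : w ^ 2 < 2 ^ b -> (w / 2 ^ b) ^ 2 < / 2 ^ b.
Proof.
  intros Hw. assert (HP : 0 < 2 ^ b) by (apply pow_lt; lra).
  replace ((w / 2 ^ b) ^ 2) with (w ^ 2 * / 2 ^ b * / 2 ^ b) by (field; lra).
  assert (Hinv : 0 < / 2 ^ b) by (apply Rinv_0_lt_compat; lra).
  assert (w ^ 2 * / 2 ^ b < 1) by (apply (Rmult_lt_reg_r (2 ^ b)); [lra|]; field_simplify; lra).
  nra.
Qed.

Lemma fixed_point_sum_le (bits : nat -> bool) (c : Z) (n a : nat) :
  fold_right Rplus 0
    (map (fun k => if bits k then powerRZ 2 (c + Z.of_nat k) else 0) (seq a n))
  <= powerRZ 2 (c + Z.of_nat (a + n)) - powerRZ 2 (c + Z.of_nat a).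
Proof.
  revert a. induction n as [|n IH]; intros a; simpl.
  - rewrite Nat.add_0_r. lra.
  - specialize (IH (S a)).
    replace (S a + n)%nat with (a + S n)%nat in IH by lia.
    replace (c + Z.of_nat (S a))%Z with (c + Z.of_nat a + 1)%Z in IH by lia.
    assert (Hdouble : powerRZ 2 (c + Z.of_nat a + 1) = 2 * powerRZ 2 (c + Z.of_nat a))
      by (rewrite powerRZ_add by lra; simpl; ring).
    assert (0 < powerRZ 2 (c + Z.of_nat a)) by (apply powerRZ_lt; lra).
    destruct (bits a); lra.
Qed.

Lemma fixed_point_lt_pow (n m : nat) (w : R) : fixed_point n m w -> w < 2 ^ m.
Proof.
  intros [bits ->].
  eapply Rle_lt_trans; [apply fixed_point_sum_le|].
  rewrite pow_powerRZ, Nat.add_0_l.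
  replace (Z.of_nat m - Z.of_nat n + Z.of_nat n)%Z with (Z.of_nat m) by lia.
  assert (0 < powerRZ 2 (Z.of_nat m - Z.of_nat n + Z.of_nat 0)) by (apply powerRZ_lt; lra).
  lra.
Qed.

Lemma quadratic_recursion_le (u : nat -> R) (a d B : R) :
  0 <= a -> a * B ^ 2 + d <= B ->
  (forall i, 0 <= u i) -> (forall i, u (S i) <= a * u i ^ 2 + d) -> u 0%nat <= B ->
  forall i, u i <= B.
Proof.
  intros Ha HB Hu Hstep H0 i. induction i as [|i IH]; [exact H0|].
  assert (u i ^ 2 <= B ^ 2) by (apply pow_incr; split; [apply Hu | exact IH]).
  specialize (Hstep i). nra.
Qed.

(* The bound [R_i] of the quadratic phase obeys [R_(i+1) = lam R_i^2], i.e.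
   [R_i = (lam R_0)^(2^i) / lam]; [C] absorbs the perturbation [d]. *)
Lemma quadratic_recursion_decay (u : nat -> R) (a lam d C R0 : R) :
  0 < a < lam -> 0 <= d -> 0 <= R0 ->
  lam * d <= (lam - a) * C -> a * C ^ 2 + d <= C ->
  (forall i, 0 <= u i) -> (forall i, u (S i) <= a * u i ^ 2 + d) -> u 0%nat <= R0 ->
  forall i, u i <= Rmax ((lam * R0) ^ (2 ^ i)%nat / lam) C.
Proof.
  intros Ha Hd HR0 HdC HC Hu Hstep H0 i.
  induction i as [|i IH].
  - apply Rmax_Rle. left. simpl. replace (lam * R0 * 1 / lam) with R0 by (field; lra).
    exact H0.
  - set (R := (lam * R0) ^ (2 ^ i)%nat / lam) in *.
    assert (HR0' : 0 <= R).
    { unfold R, Rdiv. apply Rmult_le_pos; [apply pow_le; nra|].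
      apply Rlt_le, Rinv_0_lt_compat; lra. }
    assert (HRS : (lam * R0) ^ (2 ^ S i)%nat / lam = lam * R ^ 2).
    { unfold R. rewrite Nat.pow_succ_r', Nat.mul_comm, pow_mult. field. lra. }
    rewrite HRS. specialize (Hstep i). pose proof (Hu i) as Hui.
    apply Rmax_Rle.
    destruct (Rle_lt_dec R C) as [HRC|HRC].
    + rewrite Rmax_right in IH by exact HRC. right.
      assert (u i ^ 2 <= C ^ 2) by (apply pow_incr; lra). nra.
    + rewrite Rmax_left in IH by lra.
      assert (Hsq : u i ^ 2 <= R ^ 2) by (apply pow_incr; lra).
      destruct (Rle_lt_dec d ((lam - a) * R ^ 2)) as [Hsmall|Hlarge].
      * left. nra.
      * right.
        assert ((a * R ^ 2 + d) * (lam - a) < (lam - a) * C) by nra.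
        assert (a * R ^ 2 + d < C) by nra.
        nra.
Qed.

Section Reciprocal.
Variables (b : nat) (w : R) (p : nat).
Hypothesis w_pos : 0 < w.

Definition recip_residual (i : nat) : R := 1 - w * xhat b w p i.

Lemma recip_residual_step (i : nat) :
  recip_residual i ^ 2 <= recip_residual (S i) < recip_residual i ^ 2 + w / 2 ^ b.
Proof.
  unfold recip_residual.
  change (xhat b w p (S i)) with (trunc b (- w * xhat b w p i ^ 2 + 2 * xhat b w p i)).
  set (x := xhat b w p i).
  pose proof (trunc_bounds b (- w * x ^ 2 + 2 * x)) as [Hlo Hhi].
  set (t := trunc b (- w * x ^ 2 + 2 * x)) in *.
  assert (w * (- w * x ^ 2 + 2 * x - / 2 ^ b) < w * t) by (apply Rmult_lt_compat_l; lra).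
  assert (w * t <= w * (- w * x ^ 2 + 2 * x)) by (apply Rmult_le_compat_l; lra).
  assert (Hsq : 1 - w * (- w * x ^ 2 + 2 * x) = (1 - w * x) ^ 2) by ring.
  unfold Rdiv. split; lra.
Qed.

Lemma recip_residual_init :
  powerRZ 2 (Z.of_nat p - 1) <= w < 2 ^ p -> 0 <= recip_residual 0 <= 1 / 2.
Proof.
  intros [Hlo Hhi]. unfold recip_residual. change (xhat b w p 0) with (/ 2 ^ p).
  assert (HP : 0 < 2 ^ p) by (apply pow_lt; lra).
  replace (Z.of_nat p - 1)%Z with (Z.of_nat p + -1)%Z in Hlo by lia.
  rewrite powerRZ_add, <- pow_powerRZ in Hlo by lra.
  simpl powerRZ in Hlo.
  assert (w * / 2 ^ p <= 1) by (apply (Rmult_le_reg_r (2 ^ p)); [lra|]; field_simplify; lra).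
  assert (1 / 2 <= w * / 2 ^ p) by (apply (Rmult_le_reg_r (2 ^ p)); [lra|]; field_simplify; lra).
  lra.
Qed.

Hypothesis e0_bounds : 0 <= recip_residual 0 <= 1 / 2.

Lemma recip_residual_nonneg (i : nat) : 0 <= recip_residual i.
Proof.
  destruct i as [|i]; [apply e0_bounds|].
  pose proof (recip_residual_step i). nra.
Qed.

Lemma recip_residual_le_half : w / 2 ^ b <= 1 / 4 -> forall i, recip_residual i <= 1 / 2.
Proof.
  intros Hd. apply (quadratic_recursion_le _ 1 (w / 2 ^ b)); try lra.
  - exact recip_residual_nonneg.
  - intros i. pose proof (recip_residual_step i). lra.
Qed.

Lemma recip_residual_decay :
  w / 2 ^ b <= 2 / 9 ->
  forall i, recip_residual i <= Rmax (2 / 3 * (3 / 4) ^ (2 ^ i)%nat) (3 * (w / 2 ^ b)).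
Proof.
  intros Hd i.
  assert (Hd0 : 0 <= w / 2 ^ b) by (apply Rlt_le, Rdiv_lt_0_compat; [lra | apply pow_lt; lra]).
  replace (2 / 3 * (3 / 4) ^ (2 ^ i)%nat) with ((3 / 2 * (1 / 2)) ^ (2 ^ i)%nat / (3 / 2))
    by (replace (3 / 2 * (1 / 2)) with (3 / 4) by field; field).
  apply (quadratic_recursion_decay _ 1 (3 / 2) (w / 2 ^ b)); try nra.
  - exact recip_residual_nonneg.
  - intros j. pose proof (recip_residual_step j). lra.
Qed.

End Reciprocal.

Section ReciprocalSqrt.
Variables (b : nat) (x r y0 : R).
Hypotheses (x_pos : 0 < x) (x_mul_sq_le : x * r ^ 2 <= 1) (r_ge_1 : 1 <= r) (b_ge_4 : (4 <= b)%nat).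

Definition rsqrt_residual (j : nat) : R := 1 - x * yhat b x y0 j ^ 2.

(* The exact Newton step multiplies [y] by [(2 + f) / 2] and sends the residual [f]
   to [f^2 (3 + f) / 4]; truncation costs at most [2 x y / 2^b <= 2 / (2^b r)]. *)
Lemma rsqrt_residual_step (j : nat) :
  0 < yhat b x y0 j -> 0 <= rsqrt_residual j <= 3 / 4 ->
  0 < yhat b x y0 (S j) /\
  rsqrt_residual j ^ 2 * (3 + rsqrt_residual j) / 4 <= rsqrt_residual (S j)
  <= rsqrt_residual j ^ 2 * (3 + rsqrt_residual j) / 4 + 2 / (2 ^ b * r).
Proof.
  unfold rsqrt_residual.
  change (yhat b x y0 (S j))
    with (trunc b (/ 2 * (3 * yhat b x y0 j - x * yhat b x y0 j ^ 3))).
  set (Y := yhat b x y0 j). set (f := 1 - x * Y ^ 2). intros HY Hf.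
  set (y := / 2 * (3 * Y - x * Y ^ 3)).
  assert (HP : 0 < 2 ^ b) by (apply pow_lt; lra).
  set (eps := / 2 ^ b).
  assert (Heps : 0 < eps) by (apply Rinv_0_lt_compat; lra).
  assert (Heps16 : eps <= 1 / 16)
    by (unfold eps; replace (1 / 16) with (/ 2 ^ 4) by (simpl; field); now apply inv_pow2_le).
  pose proof (trunc_bounds b y) as [Hlo Hhi]. fold eps in Hlo.
  set (Y' := trunc b y) in *.
  assert (Hy : y = Y * (2 + f) / 2) by (unfold y, f; field).
  assert (Hxy : x * y ^ 2 = 1 - f ^ 2 * (3 + f) / 4) by (rewrite Hy; unfold f; field).
  assert (Hx1 : x <= 1) by (assert (1 <= r ^ 2) by nra; nra).
  assert (HY1 : 1 / 2 <= Y).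
  { assert (1 / 4 <= Y ^ 2) by (unfold f in Hf; nra). nra. }
  assert (HYy : Y <= y) by (rewrite Hy; nra).
  assert (HY' : 0 < Y') by lra.
  assert (Hg : 0 <= f ^ 2 * (3 + f) / 4 <= 1) by nra.
  assert (HxyS : x * y <= / r).
  { assert (Hsq : (x * y * r) ^ 2 = (x * r ^ 2) * (x * y ^ 2)) by ring.
    assert (Hle : x * y * r <= 1) by (assert (0 <= x * y * r) by (apply Rmult_le_pos; nra); nra).
    apply (Rmult_le_reg_r r); [lra|]. rewrite Rinv_l by lra. exact Hle. }
  split; [exact HY'|]. split.
  - assert (Y' ^ 2 <= y ^ 2) by (apply pow_incr; lra). nra.
  - assert (Hgap : y ^ 2 - Y' ^ 2 <= eps * (2 * y)).
    { replace (y ^ 2 - Y' ^ 2) with ((y - Y') * (y + Y')) by ring.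
      apply Rmult_le_compat; lra. }
    replace (2 / (2 ^ b * r)) with (2 * eps * / r) by (unfold eps; field; lra).
    assert (x * (y ^ 2 - Y' ^ 2) <= 2 * eps * (x * y)) by nra.
    assert (2 * eps * (x * y) <= 2 * eps * / r) by (apply Rmult_le_compat_l; lra).
    lra.
Qed.

Lemma rsqrt_residual_invariant :
  0 < y0 -> 0 <= rsqrt_residual 0 <= 3 / 4 ->
  forall j, 0 < yhat b x y0 j /\ 0 <= rsqrt_residual j <= 3 / 4.
Proof.
  intros Hy0 Hf0 j. induction j as [|j [HY Hf]]; [split; assumption|].
  destruct (rsqrt_residual_step j HY Hf) as [HY' Hf'].
  set (f := rsqrt_residual j) in *.
  assert (Heps : / 2 ^ b <= / 2 ^ 4) by now apply inv_pow2_le.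
  assert (Heta : 2 / (2 ^ b * r) <= 2 / 2 ^ b).
  { unfold Rdiv. apply Rmult_le_compat_l; [lra|].
    apply Rinv_le_contravar; [apply pow_lt; lra|].
    assert (0 < 2 ^ b) by (apply pow_lt; lra). nra. }
  simpl in Heps.
  split; [exact HY'|]. nra.
Qed.

Lemma rsqrt_residual_decay :
  0 < y0 -> 0 <= rsqrt_residual 0 <= 3 / 4 -> 2 / (2 ^ b * r) <= 1 / 16 ->
  forall j, rsqrt_residual j <= Rmax ((3 / 4) ^ (2 ^ j)%nat) (16 * (2 / (2 ^ b * r))).
Proof.
  intros Hy0 Hf0 Heta j.
  pose proof (rsqrt_residual_invariant Hy0 Hf0) as Hinv.
  assert (Heta0 : 0 <= 2 / (2 ^ b * r))
    by (apply Rlt_le, Rdiv_lt_0_compat; [lra | apply Rmult_lt_0_compat; [apply pow_lt|]; lra]).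
  replace ((3 / 4) ^ (2 ^ j)%nat) with ((1 * (3 / 4)) ^ (2 ^ j)%nat / 1)
    by (rewrite Rmult_1_l; field).
  apply (quadratic_recursion_decay _ (15 / 16) 1 (2 / (2 ^ b * r))); try nra.
  - intros i. apply Hinv.
  - intros i. destruct (Hinv i) as [HY Hf].
    destruct (rsqrt_residual_step i HY Hf) as [_ [_ Hup]]. nra.
Qed.

End ReciprocalSqrt.

(* The seed [2^((q-1) div 2)] squares to [2^(q-1)] or [2^(q-2)], depending on the parity of [q]. *)
Lemma rsqrt_seed_bounds (q : nat) (x : R) :
  powerRZ 2 (- Z.of_nat q) <= x < powerRZ 2 (1 - Z.of_nat q) ->
  1 / 4 <= x * powerRZ 2 ((Z.of_nat q - 1) / 2) ^ 2 < 1.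
Proof.
  intros [Hlo Hhi].
  set (k := ((Z.of_nat q - 1) / 2)%Z).
  assert (Hk : (Z.of_nat q - 1 = 2 * k + (Z.of_nat q - 1) mod 2)%Z) by apply Z_div_mod_eq_full.
  pose proof (Z.mod_pos_bound (Z.of_nat q - 1) 2 ltac:(lia)) as Hmod.
  replace (powerRZ 2 k ^ 2) with (powerRZ 2 (k + k)) by (rewrite powerRZ_add by lra; ring).
  assert (HP : 0 < powerRZ 2 (k + k)) by (apply powerRZ_lt; lra).
  assert (Hlo' : powerRZ 2 (- Z.of_nat q + (k + k)) <= x * powerRZ 2 (k + k))
    by (rewrite (powerRZ_add _ (- Z.of_nat q)) by lra; apply Rmult_le_compat_r; lra).
  assert (Hhi' : x * powerRZ 2 (k + k) < powerRZ 2 (1 - Z.of_nat q + (k + k)))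
    by (rewrite (powerRZ_add _ (1 - Z.of_nat q)) by lra; apply Rmult_lt_compat_r; lra).
  destruct (Z.eq_dec ((Z.of_nat q - 1) mod 2) 0) as [Heven|Hodd].
  - replace (- Z.of_nat q + (k + k))%Z with (-1)%Z in Hlo' by lia.
    replace (1 - Z.of_nat q + (k + k))%Z with 0%Z in Hhi' by lia.
    simpl in Hlo', Hhi'. lra.
  - replace (- Z.of_nat q + (k + k))%Z with (-2)%Z in Hlo' by lia.
    replace (1 - Z.of_nat q + (k + k))%Z with (-1)%Z in Hhi' by lia.
    simpl in Hlo', Hhi'. lra.
Qed.

Lemma sqrt_error_of_residuals (r y e f M : R) :
  0 < r -> 0 < y -> 0 <= e <= M -> 0 <= f <= M -> M <= 3 / 4 ->
  y ^ 2 * (1 - e) = r ^ 2 * (1 - f) -> Rabs (y - r) <= 2 * r * M.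
Proof.
  intros Hr Hy He Hf HM Heq. apply Rabs_le. split.
  - destruct (Rle_dec 1 (2 * M)); [nra|].
    assert (Hsq : (r * (1 - 2 * M)) ^ 2 <= y ^ 2).
    { assert ((1 - 2 * M) ^ 2 <= 1 - M) by nra.
      assert (r ^ 2 * (1 - 2 * M) ^ 2 <= r ^ 2 * (1 - f)) by nra.
      nra. }
    assert (0 <= r * (1 - 2 * M)) by nra. nra.
  - assert (Hsq : y ^ 2 <= (r * (1 + 2 * M)) ^ 2).
    { assert (1 <= (1 + 2 * M) ^ 2 * (1 - e)) by nra.
      assert (y ^ 2 * (1 - e) <= r ^ 2) by nra.
      nra. }
    assert (0 <= r * (1 + 2 * M)) by nra. nra.
Qed.

Section Algorithm.
Variables (b p q s : nat) (w : R).
Hypotheses (w_gt_1 : 1 < w) (b_ge_4 : (4 <= b)%nat) (w_sq_lt : w ^ 2 < 2 ^ b)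
  (p_spec : powerRZ 2 (Z.of_nat p - 1) <= w < 2 ^ p)
  (q_spec : powerRZ 2 (- Z.of_nat q) <= xhat b w p s < powerRZ 2 (1 - Z.of_nat q)).

Let x := xhat b w p s.
Let y0 := powerRZ 2 ((Z.of_nat q - 1) / 2).

Lemma recip_residual_bounds : forall i, 0 <= recip_residual b w p i <= 1 / 2.
Proof.
  assert (Hw : 0 < w) by lra.
  assert (Hd : w / 2 ^ b <= 1 / 4).
  { pose proof (sq_div_pow2_lt b w w_sq_lt).
    assert (/ 2 ^ b <= / 2 ^ 4) by now apply inv_pow2_le.
    assert (0 <= w / 2 ^ b) by (apply Rlt_le, Rdiv_lt_0_compat; [lra | apply pow_lt; lra]).
    simpl in *. nra. }
  pose proof (recip_residual_init b w p Hw p_spec) as He0.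
  intros i. split.
  - exact (recip_residual_nonneg b w p Hw He0 i).
  - exact (recip_residual_le_half b w p Hw He0 Hd i).
Qed.

Lemma rsqrt_stage_valid :
  0 < x /\ x * sqrt w ^ 2 <= 1 /\ 1 <= sqrt w /\ 0 < y0 /\ 0 <= rsqrt_residual b x y0 0 <= 3 / 4.
Proof.
  pose proof (recip_residual_bounds s) as He. unfold recip_residual in He. fold x in He.
  pose proof (rsqrt_seed_bounds q x q_spec) as Hseed. fold y0 in Hseed.
  rewrite pow2_sqrt by lra.
  repeat split; try nra.
  - rewrite <- sqrt_1. apply sqrt_le_1_alt. lra.
  - apply powerRZ_lt. lra.
  - unfold rsqrt_residual. change (yhat b x y0 0) with y0. lra.
  - unfold rsqrt_residual. change (yhat b x y0 0) with y0. lra.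
Qed.

Lemma yhat_error_le_residuals :
  Rabs (yhat b x y0 s - sqrt w)
    <= 2 * sqrt w * Rmax (recip_residual b w p s) (rsqrt_residual b x y0 s)
  /\ Rmax (recip_residual b w p s) (rsqrt_residual b x y0 s) <= 3 / 4.
Proof.
  destruct rsqrt_stage_valid as (Hx & HxS & HS & Hy0 & Hf0).
  destruct (rsqrt_residual_invariant b x (sqrt w) y0 Hx HxS HS b_ge_4 Hy0 Hf0 s) as [HY Hf].
  pose proof (recip_residual_bounds s) as He.
  assert (HM : Rmax (recip_residual b w p s) (rsqrt_residual b x y0 s) <= 3 / 4)
    by (apply Rmax_lub; lra).
  split; [|exact HM].
  apply (sqrt_error_of_residuals _ _ (recip_residual b w p s) (rsqrt_residual b x y0 s));
    try lra.
  - split; [lra | apply Rmax_l].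
  - split; [lra | apply Rmax_r].
  - unfold recip_residual, rsqrt_residual. fold x. rewrite pow2_sqrt by lra. ring.
Qed.

Lemma residuals_decay :
  (6 <= b)%nat ->
  Rmax (recip_residual b w p s) (rsqrt_residual b x y0 s)
    <= Rmax ((3 / 4) ^ (2 ^ s)%nat) (Rmax (3 * (w / 2 ^ b)) (16 * (2 / (2 ^ b * sqrt w)))).
Proof.
  intros Hb6.
  destruct rsqrt_stage_valid as (Hx & HxS & HS & Hy0 & Hf0).
  assert (HP : 0 < 2 ^ b) by (apply pow_lt; lra).
  assert (Heps : / 2 ^ b <= / 2 ^ 6) by now apply inv_pow2_le.
  simpl in Heps.
  assert (Hd : w / 2 ^ b <= 2 / 9).
  { pose proof (sq_div_pow2_lt b w w_sq_lt).
    assert (0 <= w / 2 ^ b) by (apply Rlt_le, Rdiv_lt_0_compat; lra).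
    nra. }
  assert (Heta : 2 / (2 ^ b * sqrt w) <= 2 / 2 ^ b).
  { unfold Rdiv. apply Rmult_le_compat_l; [lra|]. apply Rinv_le_contravar; nra. }
  pose proof (recip_residual_decay b w p ltac:(lra) (recip_residual_init b w p ltac:(lra) p_spec)
                Hd s) as He.
  pose proof (rsqrt_residual_decay b x (sqrt w) y0 Hx HxS HS b_ge_4 Hy0 Hf0 ltac:(lra) s) as Hf.
  assert (0 <= (3 / 4) ^ (2 ^ s)%nat) by (apply pow_le; lra).
  revert He Hf. unfold Rmax. repeat destruct Rle_dec; lra.
Qed.

End Algorithm.

Lemma sqrt_mul_pow_le (m b : nat) (w : R) :
  0 <= w < 2 ^ m -> (2 * m <= b)%nat -> sqrt w * (3 / 4) ^ b <= (3 / 4) ^ (b - 2 * m).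
Proof.
  intros Hw Hmb.
  replace b with (b - 2 * m + 2 * m)%nat at 1 by lia.
  rewrite pow_add, pow_mult.
  assert (HK : 0 < (3 / 4) ^ (b - 2 * m)) by (apply pow_lt; lra).
  set (c := ((3 / 4) ^ 2) ^ m).
  assert (Hc : 0 <= c) by (apply pow_le; lra).
  assert (Hsc : sqrt w * c <= 1).
  { assert (Hsq : (sqrt w * c) ^ 2 = w * ((3 / 4) ^ 4) ^ m).
    { rewrite Rpow_mult_distr, pow2_sqrt by lra. unfold c.
      rewrite <- !pow_mult. f_equal. f_equal. lia. }
    assert (w * ((3 / 4) ^ 4) ^ m <= (2 * (3 / 4) ^ 4) ^ m).
    { rewrite Rpow_mult_distr. apply Rmult_le_compat_r; [apply pow_le; lra | lra]. }
    assert ((2 * (3 / 4) ^ 4) ^ m <= 1) by (rewrite <- (pow1 m); apply pow_incr; simpl; lra).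
    assert (0 <= sqrt w * c) by (apply Rmult_le_pos; [apply sqrt_pos | exact Hc]).
    nra. }
  nra.
Qed.

Lemma sqrt_mul_div_pow_le (m b : nat) (w : R) :
  1 <= w < 2 ^ m -> (2 * m <= b)%nat -> sqrt w * (w / 2 ^ b) <= (3 / 4) ^ (b - 2 * m).
Proof.
  intros Hw Hmb.
  assert (Hsw : sqrt w <= w).
  { pose proof (sqrt_sqrt w ltac:(lra)). assert (1 <= sqrt w) by (rewrite <- sqrt_1; apply sqrt_le_1_alt; lra).
    nra. }
  assert (HP : 0 < 2 ^ (b - 2 * m)) by (apply pow_lt; lra).
  assert (HQ : 0 < 2 ^ (2 * m)) by (apply pow_lt; lra).
  assert (H2b : 2 ^ b = 2 ^ (b - 2 * m) * 2 ^ (2 * m)) by (rewrite <- pow_add; f_equal; lia).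
  assert (Hw2 : w ^ 2 < 2 ^ (2 * m)) by (apply (sq_lt_pow2 m); [lra | lia]).
  assert (Hhalf : / 2 ^ (b - 2 * m) <= (3 / 4) ^ (b - 2 * m))
    by (rewrite <- pow_inv; apply pow_incr; lra).
  assert (Hw2b : w * (w / 2 ^ b) <= / 2 ^ (b - 2 * m)).
  { rewrite H2b. apply (Rmult_le_reg_r (2 ^ (b - 2 * m) * 2 ^ (2 * m))); [nra|].
    field_simplify; nra. }
  assert (0 <= w / 2 ^ b) by (apply Rlt_le, Rdiv_lt_0_compat; [lra | apply pow_lt; lra]).
  nra.
Qed.

Lemma eight_div_pow2_le (b : nat) : (6 <= b)%nat -> 8 / 2 ^ b <= (3 / 4) ^ b.
Proof.
  intros Hb.
  replace ((3 / 4) ^ b) with ((3 / 2) ^ b / 2 ^ b)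
    by (unfold Rdiv; rewrite <- pow_inv, <- Rpow_mult_distr; f_equal; field).
  apply Rmult_le_compat_r; [apply Rlt_le, Rinv_0_lt_compat, pow_lt; lra|].
  assert ((3 / 2) ^ 6 <= (3 / 2) ^ b) by (apply Rle_pow; [lra | exact Hb]).
  simpl in *. lra.
Qed.

Lemma error_budget (m b s : nat) (w : R) :
  1 <= w < 2 ^ m -> (2 * m <= b)%nat -> (6 <= b)%nat -> (b <= 2 ^ s)%nat ->
  2 * sqrt w * Rmax ((3 / 4) ^ (2 ^ s)%nat) (Rmax (3 * (w / 2 ^ b)) (16 * (2 / (2 ^ b * sqrt w))))
    <= 8 * (3 / 4) ^ (b - 2 * m).
Proof.
  intros Hw Hmb Hb6 Hbs.
  assert (HS : 1 <= sqrt w) by (rewrite <- sqrt_1; apply sqrt_le_1_alt; lra).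
  assert (HP : 0 < 2 ^ b) by (apply pow_lt; lra).
  assert (Hdecr : (3 / 4) ^ b <= (3 / 4) ^ (b - 2 * m)) by (apply pow_le_pow_of_le_1; [lra | lia]).
  assert (Hquad : sqrt w * (3 / 4) ^ (2 ^ s)%nat <= (3 / 4) ^ (b - 2 * m)).
  { assert ((3 / 4) ^ (2 ^ s)%nat <= (3 / 4) ^ b) by (apply pow_le_pow_of_le_1; [lra | lia]).
    pose proof (sqrt_mul_pow_le m b w ltac:(lra) Hmb). nra. }
  pose proof (sqrt_mul_div_pow_le m b w Hw Hmb) as Hrecip.
  assert (Htrunc : sqrt w * (2 / (2 ^ b * sqrt w)) <= (3 / 4) ^ (b - 2 * m) / 4).
  { replace (sqrt w * (2 / (2 ^ b * sqrt w))) with (8 / 2 ^ b / 4) by (field; lra).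
    pose proof (eight_div_pow2_le b Hb6). lra. }
  assert (0 < (3 / 4) ^ (b - 2 * m)) by (apply pow_lt; lra).
  unfold Rmax. repeat destruct Rle_dec; lra.
Qed.

Lemma small_precision_budget (m b : nat) (w : R) :
  1 < w < 2 ^ m -> (2 * m <= b)%nat -> (b < 6)%nat ->
  2 * sqrt w * (3 / 4) <= (3 / 4) ^ (b - 2 * m) * (2 + INR b).
Proof.
  intros Hw Hmb Hb.
  assert (Hs2 : sqrt w ^ 2 < 2 ^ m) by (rewrite pow2_sqrt; lra).
  pose proof (sqrt_pos w) as Hs0.
  destruct m as [|[|[|m']]]; [simpl in Hw; lra | | | lia].
  - assert (Hcases : (b = 2 \/ b = 3 \/ b = 4 \/ b = 5)%nat) by lia.
    destruct Hcases as [-> | [-> | [-> | ->]]]; simpl in *; nra.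
  - assert (Hcases : (b = 4 \/ b = 5)%nat) by lia.
    destruct Hcases as [-> | ->]; simpl in *; nra.
Qed.

Lemma log2_INR_nonneg (b : nat) : (1 <= b)%nat -> 0 <= ln (INR b) / ln 2.
Proof.
  intros Hb.
  assert (Hln2 : 0 < ln 2) by (rewrite <- ln_1; apply ln_increasing; lra).
  assert (Hb1 : 1 <= INR b) by (replace 1 with (INR 1) by reflexivity; apply le_INR; exact Hb).
  apply Rmult_le_pos; [| apply Rlt_le, Rinv_0_lt_compat; exact Hln2].
  destruct (Rle_lt_or_eq_dec 1 (INR b) Hb1) as [Hlt | Heq].
  - rewrite <- ln_1. apply Rlt_le, ln_increasing; lra.
  - rewrite <- Heq, ln_1. apply Rle_refl.
Qed.

Theorem theorem1 (n m : nat) (w : R) (b p q : nat) :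
  fixed_point n m w ->
  1 < w ->
  (Nat.max (2 * m) 4 <= b)%nat ->
  powerRZ 2 (Z.of_nat p - 1) <= w < 2 ^ p ->
  powerRZ 2 (- Z.of_nat q) <= xhat b w p (Nat.log2_up b)
    < powerRZ 2 (1 - Z.of_nat q) ->
  Rabs (yhat b (xhat b w p (Nat.log2_up b))
             (powerRZ 2 ((Z.of_nat q - 1) / 2)) (Nat.log2_up b) - sqrt w)
    <= (3 / 4) ^ (b - 2 * m) * (2 + INR b + ln (INR b) / ln 2).
Proof.
  intros Hfp Hw Hb Hp Hq.
  pose proof (fixed_point_lt_pow n m w Hfp) as Hwm.
  assert (Hw2 : w ^ 2 < 2 ^ b) by (apply (sq_lt_pow2 m); [lra | lia]).
  assert (HK : 0 < (3 / 4) ^ (b - 2 * m)) by (apply pow_lt; lra).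
  assert (Hlog : 0 <= ln (INR b) / ln 2) by (apply log2_INR_nonneg; lia).
  assert (HS : 0 <= sqrt w) by apply sqrt_pos.
  destruct (yhat_error_le_residuals b p q (Nat.log2_up b) w Hw ltac:(lia) Hw2 Hp Hq)
    as [Herr HM].
  eapply Rle_trans; [exact Herr|].
  destruct (le_lt_dec 6 b) as [Hb6 | Hb6].
  - pose proof (residuals_decay b p q (Nat.log2_up b) w Hw ltac:(lia) Hw2 Hp Hq Hb6) as Hdecay.
    pose proof (error_budget m b (Nat.log2_up b) w ltac:(lra) ltac:(lia) Hb6
                  (proj2 (Nat.log2_log2_up_spec b ltac:(lia)))) as Hbudget.
    assert (Hb6R : 6 <= INR b) by (replace 6 with (INR 6) by (simpl; ring); apply le_INR; exact Hb6).
    assert (Hmono := Rmult_le_compat_l (2 * sqrt w) _ _ ltac:(lra) Hdecay).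
    nra.
  - pose proof (small_precision_budget m b w ltac:(lra) ltac:(lia) Hb6) as Hbudget.
    assert (Hmono := Rmult_le_compat_l (2 * sqrt w) _ _ ltac:(lra) HM).
    assert (0 <= INR b) by apply pos_INR.
    nra.
Qed.
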